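(* Let $S=\left\{\begin{pmatrix}\alpha&a&b\\0&\alpha&c\\0&0&\alpha\end{pmatrix}:\alpha,a,b,c\in\mathbb C\right\}$, normed by the operator norm of $3\times 3$ matrices acting on $\mathbb C^3$ (Euclidean norm). Let $A$ be $S$ with the multiplication $(\alpha I+M)(\beta I+N)=\alpha\beta I+\alpha N+\beta M$ for strictly upper triangular $M,N$ (the unitization of the strictly upper triangular matrices with zero multiplication), and let $B$ be $S$ with the usual matrix multiplication. Then $A^{-1}=B^{-1}=\{\alpha\neq 0\}$ as sets, the map $T:A^{-1}\to B^{-1}$, $T(M)=M+F$ with $F=\begin{pmatrix}0&0&7\\0&0&0\\0&0&0\end{pmatrix}$, is a well-defined surjective isometry, $A$ is commutative but not semisimple, and $A^{-1}$ is not isomorphic as a group to $B^{-1}$.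
   Context: The metric on $A^{-1}$ and $B^{-1}$ is the one induced by the operator norm. *)

(* The scalar field is an arbitrary numClosedFieldType C
   (the complex numbers are an instance). *)
From HB Require Import structures.
From mathcomp Require Import all_boot all_order all_algebra.
Set Implicit Arguments. Unset Strict Implicit. Unset Printing Implicit Defensive.
Import Order.TTheory GRing.Theory Num.Theory.
Local Open Scope ring_scope.

Section Defs.
Variable C : numClosedFieldType.

Definition inS (M : 'M[C]_3) : bool :=
  [forall i : 'I_3, forall j : 'I_3, (j < i)%N ==> (M i j == 0)] &&
  [forall i : 'I_3, M i i == M ord0 ord0].

Definition scal (M : 'M[C]_3) : C := M ord0 ord0.
Definition strict (M : 'M[C]_3) : 'M[C]_3 := M - (scal M)%:M.

Definition mulA (X Y : 'M[C]_3) : 'M[C]_3 :=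
  (scal X * scal Y)%:M + scal X *: strict Y + scal Y *: strict X.

Definition unitA (X : 'M[C]_3) : Prop :=
  inS X /\ exists Y, inS Y /\ mulA X Y = 1%:M /\ mulA Y X = 1%:M.
Definition unitB (X : 'M[C]_3) : Prop :=
  inS X /\ exists Y, inS Y /\ X *m Y = 1%:M /\ Y *m X = 1%:M.

Definition vnorm (v : 'cV[C]_3) : C := sqrtC (\sum_i `|v i ord0| ^+ 2).

Definition is_opnorm (M : 'M[C]_3) (r : C) : Prop :=
  (forall v : 'cV[C]_3, vnorm (M *m v) <= r * vnorm v) /\
  (forall r' : C, (forall v : 'cV[C]_3, vnorm (M *m v) <= r' * vnorm v) -> r <= r').

Definition Fmx : 'M[C]_3 := 7 *: delta_mx ord0 ord_max.
Definition Tmap (M : 'M[C]_3) : 'M[C]_3 := M + Fmx.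

Definition radA (x : 'M[C]_3) : Prop :=
  inS x /\ forall y, inS y -> unitA (1%:M - mulA y x).

Definition semisimpleA : Prop := forall x, radA x -> x = 0.

Definition commutativeA : Prop :=
  forall X Y, inS X -> inS Y -> mulA X Y = mulA Y X.

Definition group_iso_AB (phi : 'M[C]_3 -> 'M[C]_3) : Prop :=
  (forall X, unitA X -> unitB (phi X)) /\
  (forall X Y, unitA X -> unitA Y -> phi X = phi Y -> X = Y) /\
  (forall Z, unitB Z -> exists X, unitA X /\ phi X = Z) /\
  (forall X Y, unitA X -> unitA Y -> phi (mulA X Y) = phi X *m phi Y).

End Defs.

(* Every element of S decomposes as X = (scal X)%:M + strict X, where the
   strictly upper triangular part N := strict X satisfies N^3 = 0.  We first
   record, for square matrices of any size over any commutative ring, the "band" predicate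
   [upper p N] (all entries strictly below the p-th superdiagonal vanish) with
   its closure properties, and the explicit inverse of a unit scalar plus a
   nilpotent of order 3.  Specialising to S we then show:
   - membership in S is exactly "scalar + strictly upper triangular";
   - X is invertible in A, resp. in B, iff scal X != 0 (explicit inverses
     b I - b^2 N in A and b I - b^2 N + b^3 N^2 in B, with b = (scal X)^-1);
   - adding the strictly upper triangular F keeps S and the scalar part, so
     T maps A^-1 onto B^-1, and T X - T Y = X - Y makes T an isometry;
   - A is commutative, and every x in S with scal x = 0 lies in the Jacobson
     radical, so A is not semisimple;
   - B^-1 contains two non-commuting units, so no group isomorphism from the
     commutative group A^-1 onto B^-1 exists. *)
From Pilot Require Import Defs.
From HB Require Import structures.
From mathcomp Require Import all_boot all_order all_algebra.
Set Implicit Arguments. Unset Strict Implicit. Unset Printing Implicit Defensive.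
Import Order.TTheory GRing.Theory Num.Theory.
Local Open Scope ring_scope.

Section Band.
Variables (R : comNzRingType) (n : nat).
Implicit Types (N M : 'M[R]_n) (a b : R).

(* [upper p N]: every entry N i j with j < i + p vanishes; [upper 1] means
   strictly upper triangular, [upper n] means zero. *)
Definition upper (p : nat) N := forall i j : 'I_n, (j < i + p)%N -> N i j = 0.

Lemma upper_mono p q N : (q <= p)%N -> upper p N -> upper q N.
Proof. by move=> le_qp hN i j hij; apply: hN; rewrite (leq_trans hij) ?leq_add2l. Qed.

Lemma upperD p N M : upper p N -> upper p M -> upper p (N + M).
Proof. by move=> hN hM i j hij; rewrite mxE hN ?hM ?addr0. Qed.

Lemma upperZ p a N : upper p N -> upper p (a *: N).
Proof. by move=> hN i j hij; rewrite mxE hN ?mulr0. Qed.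

Lemma upperN p N : upper p N -> upper p (- N).
Proof. by move=> hN; rewrite -scaleN1r; apply: upperZ. Qed.

Lemma upperM p q N M : upper p N -> upper q M -> upper (p + q) (N *m M).
Proof.
move=> hN hM i j hij; rewrite mxE; apply: big1 => k _.
have [lt_k|ge_k] := ltnP k (i + p); first by rewrite hN ?mul0r.
by rewrite hM ?mulr0 // (leq_trans hij) // addnA leq_add2r.
Qed.

Lemma upper_full N : upper n N -> N = 0.
Proof. by move=> hN; apply/matrixP => i j; rewrite mxE hN // ltn_addl. Qed.

Lemma upper_delta (i0 j0 : 'I_n) : (i0 < j0)%N -> upper 1 (delta_mx i0 j0).
Proof.
move=> lt_ij i j; rewrite mxE addn1 ltnS.
have [->|] := eqVneq i i0; have [->|] //= := eqVneq j j0.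
by rewrite leqNgt lt_ij.
Qed.

Lemma scalar_nil3_inv a b N : a * b = 1 -> N *m N *m N = 0 ->
  let Y := b%:M + ((- (b * b)) *: N + (b * b * b) *: (N *m N)) in
  (a%:M + N) *m Y = 1%:M /\ Y *m (a%:M + N) = 1%:M.
Proof.
move=> ab1 N3 Y; rewrite /Y.
have e1 : a * - (b * b) + b = 0 by rewrite mulrN !mulrA ab1 mul1r addNr.
have e2 : a * (b * b * b) + - (b * b) = 0 by rewrite !mulrA ab1 mul1r addrN.
split.
  rewrite mulmxDl !mulmxDr !mul_scalar_mx !mul_mx_scalar -!scalemxAr mulmxA N3.
  rewrite scaler0 addr0 !scalerA scale_scalar_mx ab1 -[RHS]addr0 -addrA.
  by congr (_ + _); rewrite addrACA -!scalerDl e1 e2 !scale0r addr0.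
rewrite !mulmxDl !mulmxDr !mul_scalar_mx !mul_mx_scalar -!scalemxAl.
rewrite !scalerA scale_scalar_mx mulrC ab1 N3 scaler0 !addr0.
rewrite -[RHS]addr0 -addrA; congr (_ + _).
rewrite !addrA -scalerDl (addrC b) e1 scale0r add0r -scalerDl.
by rewrite (addrC (- (b * b))) e2 scale0r.
Qed.

End Band.

(* The product of A; the bare name is shadowed by a lemma of the fraction library. *)
Local Notation mulA := Defs.mulA.

Section AlgebraS.
Variable C : numClosedFieldType.
Implicit Types (X Y N x y : 'M[C]_3) (a b : C).

Lemma scalar_mx0 : (0 : C)%:M = 0 :> 'M_3.
Proof. exact: raddf0. Qed.

Lemma inSP X :
  reflect ((forall i j : 'I_3, (j < i)%N -> X i j = 0) /\ forall i, X i i = scal X)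
          (inS X).
Proof.
apply: (iffP andP) => [[/forallP low /forallP diag]|[low diag]]; split.
- by move=> i j lt_ji; apply/eqP; move: (low i) => /forallP/(_ j)/implyP; apply.
- by move=> i; apply/eqP.
- by apply/forallP => i; apply/forallP => j; apply/implyP => /low ->.
- by apply/forallP => i; rewrite diag.
Qed.

Lemma scal_strict X : X = (scal X)%:M + strict X.
Proof. by rewrite /strict addrC subrK. Qed.

Lemma upper_strict X : inS X -> upper 1 (strict X).
Proof.
case/inSP=> low diag i j; rewrite addn1 ltnS leq_eqVlt => /orP[/eqP/val_inj->|lt_ji].
  by rewrite !mxE eqxx mulr1n diag subrr.
by rewrite !mxE low // (gtn_eqF lt_ji : (i == j) = false) mulr0n subrr.
Qed.

Lemma scal_scalarD a N : upper 1 N -> scal (a%:M + N) = a.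
Proof. by move=> hN; rewrite /scal !mxE eqxx mulr1n hN ?addr0. Qed.

Lemma inS_scalarD a N : upper 1 N -> inS (a%:M + N).
Proof.
move=> hN; apply/inSP; split=> [i j lt_ji|i].
  rewrite !mxE hN ?addn1 ?ltnS ?(ltnW lt_ji) //.
  by rewrite (gtn_eqF lt_ji : (i == j) = false) mulr0n add0r.
by rewrite scal_scalarD // !mxE eqxx mulr1n hN ?addr0 ?addn1.
Qed.

Lemma strict_scalarD a N : upper 1 N -> strict (a%:M + N) = N.
Proof. by move=> hN; rewrite /strict scal_scalarD // addrC addKr. Qed.

Lemma inS_addr X N : inS X -> upper 1 N -> inS (X + N) /\ scal (X + N) = scal X.
Proof.
move=> hX hN; have -> : X + N = (scal X)%:M + (strict X + N) by rewrite addrA -scal_strict.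
have hsN : upper 1 (strict X + N) by apply: upperD => //; apply: upper_strict.
by split; [apply: inS_scalarD | apply: scal_scalarD].
Qed.

Lemma mulA_comm X Y : mulA X Y = mulA Y X.
Proof. by rewrite /mulA [scal X * _]mulrC addrAC. Qed.

Lemma scal_mulA X Y : mulA X Y ord0 ord0 = scal X * scal Y.
Proof. by rewrite !mxE eqxx mulr1n !subrr !mulr0 !addr0. Qed.

Lemma commutative_A : commutativeA C.
Proof. by move=> X Y _ _; apply: mulA_comm. Qed.

(* A^-1 = {X in S | scal X != 0}; the inverse of a I + N in A is b I - b^2 N. *)
Lemma unitA_iff X : unitA X <-> inS X /\ scal X != 0.
Proof.
split=> [[hX [Y [_ [XY1 _]]]]|[hX sX0]].
  split=> //; apply: contraTneq isT => sX0.
  move/matrixP/(_ ord0 ord0): XY1; rewrite scal_mulA sX0 mul0r mxE.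
  by move/eqP; rewrite eq_sym oner_eq0.
set b := (scal X)^-1; set N := strict X.
have hbN : upper 1 ((- (b * b)) *: N) by apply/upperZ/upper_strict.
have Xb1 : scal X * b = 1 by rewrite mulfV.
have XY1 : mulA X (b%:M + (- (b * b)) *: N) = 1%:M.
  rewrite /mulA scal_scalarD // strict_scalarD // Xb1 scalerA -/N -addrA -scalerDl.
  by rewrite mulrN mulrA Xb1 mul1r addNr scale0r addr0.
split=> //; exists (b%:M + (- (b * b)) *: N).
by split; [apply: inS_scalarD | split; last rewrite mulA_comm].
Qed.

Lemma scal_mulmx X Y : inS Y -> (X *m Y) ord0 ord0 = scal X * scal Y.
Proof.
case/inSP=> low _; rewrite mxE (bigD1 ord0) //= big1 ?addr0 // => k k0.
by rewrite low ?mulr0 // lt0n; apply: contra k0 => /eqP k0; apply/eqP/val_inj.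
Qed.

(* B^-1 = {X in S | scal X != 0}, with inverse b I - b^2 N + b^3 N^2. *)
Lemma unitB_iff X : unitB X <-> inS X /\ scal X != 0.
Proof.
split=> [[hX [Y [hY [XY1 _]]]]|[hX sX0]].
  split=> //; apply: contraTneq isT => sX0.
  move/matrixP/(_ ord0 ord0): XY1; rewrite scal_mulmx // sX0 mul0r !mxE /=.
  by move/eqP; rewrite eq_sym oner_eq0.
set b := (scal X)^-1; set N := strict X.
have hN : upper 1 N by apply: upper_strict.
have hN2 : upper 2 (N *m N) by apply: (upperM hN hN).
have N3 : N *m N *m N = 0 by apply/upper_full/(upperM hN2 hN).
have hY : upper 1 ((- (b * b)) *: N + (b * b * b) *: (N *m N)).
  by apply: upperD; apply: upperZ => //; apply: upper_mono hN2.
have [XY1 YX1] := scalar_nil3_inv (mulfV sX0) N3.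
split=> //; eexists; split; first exact: inS_scalarD hY.
by rewrite (scal_strict X); split; [exact: XY1 | exact: YX1].
Qed.

Lemma upper_F : upper 1 (Fmx C).
Proof. exact/upperZ/upper_delta. Qed.

Lemma Tmap_unit X : unitA X -> unitB (Tmap X).
Proof.
move/unitA_iff=> [hX sX0]; apply/unitB_iff.
by have [hXF ->] := inS_addr hX upper_F.
Qed.

Lemma Tmap_onto Y : unitB Y -> exists X, unitA X /\ Tmap X = Y.
Proof.
move/unitB_iff=> [hY sY0]; exists (Y - Fmx C); split; last by rewrite /Tmap subrK.
by have [hYF sYF] := inS_addr hY (upperN upper_F); apply/unitA_iff; rewrite sYF.
Qed.

(* ... and, being a translation, preserves differences hence distances. *)
Lemma Tmap_sub X Y : Tmap X - Tmap Y = X - Y.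
Proof. by rewrite /Tmap opprD addrACA subrr addr0. Qed.

Lemma radA_strict x : inS x -> scal x = 0 -> radA x.
Proof.
move=> hx sx0; split=> // y _.
have hx1 : upper 1 x by rewrite -[x]subr0 -scalar_mx0 -sx0; apply: upper_strict.
have -> : 1%:M - mulA y x = 1%:M + (- scal y) *: x.
  rewrite /mulA sx0 mulr0 scalar_mx0 scale0r add0r addr0 scaleNr /strict sx0.
  by rewrite scalar_mx0 subr0.
have hyx : upper 1 ((- scal y) *: x) by apply: upperZ.
by apply/unitA_iff; rewrite scal_scalarD // oner_eq0; split=> //; apply: inS_scalarD.
Qed.

(* Two matrix units above the diagonal, with E01 E12 <> 0 = E12 E01. *)
Definition E01 : 'M[C]_3 := delta_mx ord0 (@Ordinal 3 1 isT).
Definition E12 : 'M[C]_3 := delta_mx (@Ordinal 3 1 isT) (@Ordinal 3 2 isT).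

Lemma not_semisimple_A : ~ semisimpleA C.
Proof.
have E0 : E01 != 0.
  by apply/negP => /eqP/matrixP/(_ ord0 (@Ordinal 3 1 isT))/eqP; rewrite !mxE oner_eq0.
have radE : radA E01.
  apply: radA_strict; last by rewrite /scal mxE.
  by rewrite -[E01]add0r -scalar_mx0; apply/inS_scalarD/upper_delta.
by move=> ss; move: E0; rewrite (ss _ radE) eqxx.
Qed.

Lemma unitB_noncomm :
  [/\ unitB (1%:M + E01), unitB (1%:M + E12) &
      (1%:M + E01) *m (1%:M + E12) != (1%:M + E12) *m (1%:M + E01)].
Proof.
have unit1D (i j : 'I_3) : (i < j)%N -> unitB (1%:M + delta_mx i j : 'M[C]_3).
  move=> lt_ij; have hE := upper_delta C lt_ij.
  by apply/unitB_iff; rewrite scal_scalarD // oner_eq0; split=> //; apply: inS_scalarD.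
split; [exact: unit1D | exact: unit1D |].
rewrite !mulmxDl !mulmxDr !mul1mx !mulmx1 /E01 /E12 mul_delta_mx mul_delta_mx_0 //.
apply/negP => /eqP/matrixP/(_ ord0 (@Ordinal 3 2 isT)).
by rewrite !mxE /= !add0r => /eqP; rewrite oner_eq0.
Qed.

(* A group isomorphism would transport commutativity of A^-1 to B^-1. *)
Lemma no_group_iso : ~ exists phi : 'M[C]_3 -> 'M[C]_3, group_iso_AB phi.
Proof.
case=> phi [_ [_ [onto hom]]]; have [u1 u2] := unitB_noncomm.
have [X1 [uX1 <-]] := onto _ u1; have [X2 [uX2 <-]] := onto _ u2.
by rewrite -!hom // mulA_comm eqxx.
Qed.

End AlgebraS.

Theorem mainTheorem6 (C : numClosedFieldType) :
  (forall X : 'M[C]_3, (unitA X <-> inS X /\ scal X != 0) /\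
                       (unitB X <-> inS X /\ scal X != 0)) /\
  (forall X : 'M[C]_3, unitA X -> unitB (Tmap X)) /\
  (forall Y : 'M[C]_3, unitB Y -> exists X, unitA X /\ Tmap X = Y) /\
  (forall X Y : 'M[C]_3, unitA X -> unitA Y ->
     forall r, is_opnorm (Tmap X - Tmap Y) r <-> is_opnorm (X - Y) r) /\
  commutativeA C /\
  ~ semisimpleA C /\
  ~ (exists phi : 'M[C]_3 -> 'M[C]_3, group_iso_AB phi).
Proof.
split; first by move=> X; split; [apply: unitA_iff | apply: unitB_iff].
split; first exact: Tmap_unit.
split; first exact: Tmap_onto.
split; first by move=> X Y _ _ r; rewrite Tmap_sub.
split; first exact: commutative_A.
split; [exact: not_semisimple_A | exact: no_group_iso].
Qed.
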